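(* Let $M$ be a complex matrix with $2^{k+n}$ columns (and $2^{k+n+m}$ rows for some $m\ge0$) such that $M^\dagger M\preceq I$, and let $\Sigma$ be a $2^k\times 2^k$ positive semidefinite matrix. For an $n$-qubit state $\rho$ define $A^\rho_M(\Sigma)=\mathrm{Tr}_{>k}\big(M(\Sigma\otimes\rho)M^\dagger\big)$. Let $\rho_{\mathrm{mm}}=I/2^n$ and, for a non-identity $n$-qubit Pauli observable $P$, $\rho_P=(I+P)/2^n$. Then $$\mathbb{E}_P\left[\big\|A^{\rho_{\mathrm{mm}}}_M(\Sigma)-A^{\rho_P}_M(\Sigma)\big\|_{\mathrm{tr}}^2\right]\ \le\ \frac{1}{2^{n-k}}\cdot\frac{1}{2^{2n}-1}\cdot\Big(\mathrm{Tr}\big(M^\dagger M(\Sigma\otimes I_{2^n})\big)\Big)^2,$$ where $\mathbb{E}_P$ is over a uniformly random one of the $4^n-1$ non-identity Pauli observables.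
   Context: $\mathrm{Tr}_{>k}$ denotes the partial trace over all qubits except the first $k$. $\|\cdot\|_{\mathrm{tr}}$ is the trace norm. An $n$-qubit Pauli observable is a tensor product $\sigma_1\otimes\cdots\otimes\sigma_n$ with each $\sigma_j\in\{I,X,Y,Z\}$ (the standard Pauli matrices); non-identity means not equal to $I^{\otimes n}$. $I_{2^n}$ is the $2^n\times2^n$ identity. *)

From HB Require Import structures.
From mathcomp Require Import all_boot all_order all_algebra all_field.
From mathcomp Require mxtens.
Set Implicit Arguments.
Unset Strict Implicit.
Unset Printing Implicit Defensive.
Import Order.TTheory GRing.Theory Num.Theory.
Local Open Scope ring_scope.

Definition adjmx {m n} (A : 'M[algC]_(m, n)) : 'M[algC]_(n, m) := (map_mx Num.conj A)^T.

(* Kronecker product (mathcomp-real-closed's tensmx; index (i,j) of 'I_(m*n) is i*n+j) *)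
Definition kron {m n p q} (A : 'M[algC]_(m, n)) (B : 'M[algC]_(p, q)) :
  'M[algC]_(m * p, n * q) := mxtens.tensmx A B.

Definition psdmx {n} (A : 'M[algC]_n) : Prop :=
  A = adjmx A /\ forall v : 'cV[algC]_n, 0 <= (adjmx v *m A *m v) 0 0.

Definition loewner_le {n} (A B : 'M[algC]_n) : Prop := psdmx (B - A).

(* Partial trace over the second tensor factor: for A on C^p (x) C^q, returns
   Tr_2 A on C^p.  With p = 2^k, q = 2^(n+m) this is Tr_{>k}. *)
Definition ptrace2 {p q} (A : 'M[algC]_(p * q)) : 'M[algC]_p :=
  \matrix_(i, j) \sum_(l < q) A (mxtens.mxtens_index (i, l)) (mxtens.mxtens_index (j, l)).

(* Trace norm ||X||_tr = Tr sqrt(X^dagger X) = sum of the square roots of the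
   eigenvalues of the (Hermitian, hence normal) matrix X^dagger X, obtained from
   the library spectral decomposition. *)
Definition trnorm {n} (X : 'M[algC]_n) : algC :=
  \sum_(i < n) sqrtC (spectral_diag (adjmx X *m X) 0 i).

(* single-qubit Paulis: 0 -> I, 1 -> X, 2 -> Y, 3 -> Z *)
Definition pauli1 (a : 'I_4) : 'M[algC]_2 :=
  match val a with
  | 0%N => 1%:M
  | 1%N => \matrix_(i < 2, j < 2) (if i != j then 1 else 0)
  | 2%N => \matrix_(i < 2, j < 2)
             (if i == j then 0 else if val i == 0%N then - 'i else 'i)
  | _ => \matrix_(i < 2, j < 2) (if i == j then (if val i == 0%N then 1 else -1) else 0)
  end.

Fixpoint pauli (n : nat) : {ffun 'I_n -> 'I_4} -> 'M[algC]_(2 ^ n) :=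
  match n return {ffun 'I_n -> 'I_4} -> 'M[algC]_(2 ^ n) with
  | 0%N => fun _ => 1%:M
  | n'.+1 => fun s =>
      castmx (esym (expnS 2 n'), esym (expnS 2 n'))
        (kron (pauli1 (s ord0)) (pauli [ffun i : 'I_n' => s (lift ord0 i)]))
  end.

Definition pauli_id (n : nat) : {ffun 'I_n -> 'I_4} := [ffun=> ord0].

Definition rho_mm (n : nat) : 'M[algC]_(2 ^ n) := (2 ^+ n)^-1 *: 1%:M.
Definition rho_P (n : nat) (s : {ffun 'I_n -> 'I_4}) : 'M[algC]_(2 ^ n) :=
  (2 ^+ n)^-1 *: (1%:M + pauli s).

Definition Amap {k n m} (M : 'M[algC]_(2 ^ k * 2 ^ (n + m), 2 ^ k * 2 ^ n))
  (Sigma : 'M[algC]_(2 ^ k)) (rho : 'M[algC]_(2 ^ n)) : 'M[algC]_(2 ^ k) :=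
  ptrace2 (M *m kron Sigma rho *m adjmx M).

(* With g_ij(b, c) := tr(M_ib Sigma M_jc^dagger), where M_ib is the block of M
   with output index (i, .) and input index (., b), the (i, j) entry of
   A^rho_mm - A^rho_P is -2^-n sum_(b,c) g_ij(b, c) P_bc.  Summing over all 4^n
   Pauli strings (the identity included), orthogonality of the Pauli basis gives
   sum_P ||A^rho_mm - A^rho_P||_F^2 = 2^-n sum |g_ij(b, c)|^2.  Cauchy-Schwarz for
   the positive form (u, w) |-> tr(u Sigma w^dagger) bounds this by
   2^-n (sum_(i,b) g_ii(b, b))^2 = 2^-n tr(M^dagger M (Sigma (x) I))^2, and
   ||X||_tr^2 <= 2^k ||X||_F^2 for a 2^k x 2^k matrix X. *)

From HB Require Import structures.
From mathcomp Require Import all_boot all_order all_algebra all_field.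
From mathcomp Require Import mxtens ring.
Import Order.TTheory GRing.Theory Num.Theory.
Local Open Scope ring_scope.

Lemma adjmxE m n (A : 'M[algC]_(m, n)) i j : adjmx A i j = (A j i)^*.
Proof. by rewrite /adjmx !mxE. Qed.

Lemma adjmxK m n (A : 'M[algC]_(m, n)) : adjmx (adjmx A) = A.
Proof. by apply/matrixP => i j; rewrite !adjmxE conjCK. Qed.

Lemma adjmxD m n (A B : 'M[algC]_(m, n)) : adjmx (A + B) = adjmx A + adjmx B.
Proof. by apply/matrixP => i j; rewrite !mxE rmorphD. Qed.

Lemma adjmxZ m n a (A : 'M[algC]_(m, n)) : adjmx (a *: A) = a^* *: adjmx A.
Proof. by apply/matrixP => i j; rewrite !mxE rmorphM. Qed.

Lemma adjmxM m n p (A : 'M[algC]_(m, n)) (B : 'M[algC]_(n, p)) :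
  adjmx (A *m B) = adjmx B *m adjmx A.
Proof.
apply/matrixP => i j; rewrite adjmxE !mxE rmorph_sum; apply: eq_bigr => l _.
by rewrite !adjmxE rmorphM mulrC.
Qed.

Lemma mxtrace_adjmx n (A : 'M[algC]_n) : \tr (adjmx A) = (\tr A)^*.
Proof. by rewrite rmorph_sum; apply: eq_bigr => i _; rewrite adjmxE. Qed.

Lemma big_mxtens_index (V : nmodType) d N (F : 'I_(d * N) -> V) :
  \sum_x F x = \sum_(a < d) \sum_(b < N) F (mxtens_index (a, b)).
Proof.
rewrite pair_big /= (reindex (@mxtens_index d N)) //=.
  by apply: eq_bigr => -[a b].
by exists (@mxtens_unindex d N) => x _; rewrite (mxtens_indexK, mxtens_unindexK).
Qed.

Lemma mxtens_index_eq d N (a a' : 'I_d) (b b' : 'I_N) :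
  (mxtens_index (a, b) == mxtens_index (a', b')) = (a == a') && (b == b').
Proof. by rewrite (inj_eq (can_inj (@mxtens_indexK d N))) xpair_eqE. Qed.

Lemma sum_mul_delta (R : pzSemiRingType) (I : finType) (i : I) (F : I -> R) :
  \sum_j F j * (i == j)%:R = F i.
Proof.
rewrite (bigD1 i) //= eqxx mulr1 big1 ?addr0 // => j /negbTE.
by rewrite eq_sym => ->; rewrite mulr0.
Qed.

Definition ffcons {n} {T : finType} (a : T) (s : {ffun 'I_n -> T}) : {ffun 'I_n.+1 -> T} :=
  [ffun i => if unlift ord0 i is Some j then s j else a].

Lemma ffcons0 n (T : finType) a (s : {ffun 'I_n -> T}) : ffcons a s ord0 = a.
Proof. by rewrite ffunE unlift_none. Qed.

Lemma ffconsS n (T : finType) a (s : {ffun 'I_n -> T}) :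
  [ffun i => ffcons a s (lift ord0 i)] = s.
Proof. by apply/ffunP => i; rewrite !ffunE liftK. Qed.

Lemma big_ffunS (V : nmodType) n (T : finType) (F : {ffun 'I_n.+1 -> T} -> V) :
  \sum_s F s = \sum_(a : T) \sum_(s : {ffun 'I_n -> T}) F (ffcons a s).
Proof.
rewrite pair_big /= (reindex (fun p => ffcons p.1 p.2)) //=.
exists (fun s => (s ord0, [ffun i => s (lift ord0 i)])) => [[a s] _|s _].
  by rewrite ffcons0 ffconsS.
apply/ffunP => i; rewrite ffunE /=.
by case: unliftP => [j ->|->]; rewrite ?ffunE.
Qed.

Lemma pauli1_orth (b c b' c' : 'I_2) :
  \sum_(a : 'I_4) pauli1 a b c * (pauli1 a b' c')^* =
  2 * ((b == b')%:R * (c == c')%:R).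
Proof.
rewrite !big_ord_recr big_ord0 /= add0r /pauli1 /=.
case: b => [[|[|//]] ?]; case: c => [[|[|//]] ?];
case: b' => [[|[|//]] ?]; case: c' => [[|[|//]] ?];
(* [(- 'i)^*] is computed by folding [- 'i] into ['i^*] first. *)
rewrite !mxE /= -?conjCi ?conjCK ?(conjCi, conjC0, conjC1, conjCN1) /=;
rewrite ?(mulr0, mul0r, mulr1, mul1r, addr0, add0r, mulrNN, mulNr, mulrN, opprK)
  -?expr2 ?sqrCi ?(opprK, subrr) //.
Qed.

Lemma pauli_orth n (b c b' c' : 'I_(2 ^ n)) :
  \sum_(s : {ffun 'I_n -> 'I_4}) pauli s b c * (pauli s b' c')^* =
  (2 ^ n)%:R * ((b == b')%:R * (c == c')%:R).
Proof.
elim: n b c b' c' => [|n IH] b c b' c'.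
  rewrite (big_pred1 [ffun=> ord0]) => [|s]; last by apply/esym/eqP/ffunP => -[].
  by rewrite /= !mxE !ord1 eqxx conjC1 mulr1 mul1r.
rewrite big_ffunS /=.
under eq_bigr => a _ do under eq_bigr => s _ do rewrite !castmxE ffcons0 ffconsS.
have cast_eq (x y : 'I_(2 ^ n.+1)) :
    (x == y) = (cast_ord (esym (esym (expnS 2 n))) x == cast_ord (esym (esym (expnS 2 n))) y).
  by rewrite (inj_eq (@cast_ord_inj _ _ _)).
rewrite (cast_eq b) (cast_eq c).
move: (cast_ord _ b) (cast_ord _ c) (cast_ord _ b') (cast_ord _ c') => B C B' C'.
case: (mxtens_indexP B) => b1 b2; case: (mxtens_indexP C) => c1 c2.
case: (mxtens_indexP B') => b1' b2'; case: (mxtens_indexP C') => c1' c2'.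
under eq_bigr => a _ do under eq_bigr => s _ do rewrite /kron !tensmxE rmorphM mulrACA.
under eq_bigr => a _ do rewrite -mulr_sumr IH.
rewrite -mulr_suml pauli1_orth !mxtens_index_eq -!mulnb !natrM expnS natrM.
ring.
Qed.

Lemma sqr_normC_sum (I : finType) (x : I -> algC) :
  `|\sum_i x i| ^+ 2 = \sum_i \sum_j x i * (x j)^*.
Proof. by rewrite normCK rmorph_sum big_distrlr. Qed.

Lemma pauli_parseval n (g : 'I_(2 ^ n) -> 'I_(2 ^ n) -> algC) :
  \sum_(s : {ffun 'I_n -> 'I_4}) `|\sum_b \sum_c g b c * pauli s b c| ^+ 2 =
  (2 ^ n)%:R * \sum_b \sum_c `|g b c| ^+ 2.
Proof.
under eq_bigr => s _ do rewrite pair_bigA sqr_normC_sum.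
rewrite [in RHS]pair_bigA mulr_sumr exchange_big; apply: eq_bigr => p _.
rewrite exchange_big (bigD1 p) //= [X in _ + X]big1 ?addr0 => [|q /negbTE neq_qp].
- under eq_bigr => s _ do rewrite rmorphM mulrACA.
  by rewrite -mulr_sumr pauli_orth !eqxx /= !mulr1 mulrC normCK.
- under eq_bigr => s _ do rewrite rmorphM mulrACA.
  by rewrite -mulr_sumr pauli_orth -natrM mulnb -xpair_eqE -!surjective_pairing
    eq_sym neq_qp mulr0n !mulr0.
Qed.

Lemma sqr_sum_le_card (R : numDomainType) (I : finType) (a : I -> R) :
  (forall i, a i \is Num.real) -> (\sum_i a i) ^+ 2 <= #|I|%:R * \sum_i a i ^+ 2.
Proof.
move=> a_real.
have : 0 <= \sum_i \sum_j (a i - a j) ^+ 2.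
  by do 2!apply: sumr_ge0 => ? _; rewrite -realEsqr realB.
suff -> : \sum_i \sum_j (a i - a j) ^+ 2 =
    (#|I|%:R * \sum_i a i ^+ 2 - (\sum_i a i) ^+ 2) *+ 2.
  by rewrite pmulrn_lge0 // subr_ge0.
under eq_bigr => i _ do
  rewrite (eq_bigr _ (fun j _ => sqrrB (a i) (a j))) !big_split sumrN sumr_const
    sumrMnl -mulr_sumr.
rewrite !big_split /= sumrN !sumrMnl -mulr_suml sumr_const.
have -> : #|(fun _ : I => true)| = #|I| by apply: eq_card.
by rewrite mulr_natl expr2 mulrnBl mulr2n addrAC.
Qed.

Lemma sumr_le_pred (R : numDomainType) (I : finType) (P : pred I) (F : I -> R) :
  (forall i, 0 <= F i) -> \sum_(i | P i) F i <= \sum_i F i.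
Proof. by move=> F_ge0; rewrite [leRHS](bigID P) /= lerDl sumr_ge0. Qed.

Lemma adjmx_mul_diag m n (Y : 'M[algC]_(m, n)) i :
  (adjmx Y *m Y) i i = \sum_j `|Y j i| ^+ 2.
Proof. by rewrite mxE; apply: eq_bigr => j _; rewrite adjmxE normCK mulrC. Qed.

Lemma mxtrace_adjmx_mul m n (Y : 'M[algC]_(m, n)) :
  \tr (adjmx Y *m Y) = \sum_i \sum_j `|Y j i| ^+ 2.
Proof. by apply: eq_bigr => i _; rewrite adjmx_mul_diag. Qed.

Lemma invmx_spectral n (A : 'M[algC]_n) :
  invmx (spectralmx A) = adjmx (spectralmx A).
Proof. by rewrite invmx_unitary ?spectral_unitarymx // /adjmx map_trmx. Qed.

Lemma spectral_diag_herm n (A : 'M[algC]_n) : adjmx A = A ->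
  diag_mx (spectral_diag A) = spectralmx A *m A *m adjmx (spectralmx A).
Proof.
move=> A_herm; have A_normal : A \is normalmx.
  by rewrite qualifE -map_trmx -/(adjmx A) A_herm.
have P_unit := spectral_unit A; rewrite -invmx_spectral.
set P := spectralmx A; set D := diag_mx _.
have -> : A = invmx P *m D *m P by apply/orthomx_spectralP.
by rewrite !mulmxA mulmxV // mul1mx -mulmxA mulmxV // mulmx1.
Qed.

Lemma sum_spectral_diag_herm n (A : 'M[algC]_n) : adjmx A = A ->
  \sum_i spectral_diag A 0 i = \tr A.
Proof.
move=> /spectral_diag_herm diagE; rewrite -mxtrace_diag diagE mxtrace_mulC mulmxA.
by rewrite -invmx_spectral mulVmx ?spectral_unit ?mul1mx.
Qed.

Lemma adjmx_gram m n (X : 'M[algC]_(m, n)) : adjmx (adjmx X *m X) = adjmx X *m X.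
Proof. by rewrite adjmxM adjmxK. Qed.

Lemma gram_spectral_diag_ge0 m n (X : 'M[algC]_(m, n)) i :
  0 <= spectral_diag (adjmx X *m X) 0 i.
Proof.
set P := spectralmx (adjmx X *m X).
have -> : spectral_diag (adjmx X *m X) 0 i = diag_mx (spectral_diag (adjmx X *m X)) i i.
  by rewrite mxE eqxx mulr1n.
rewrite spectral_diag_herm ?adjmx_gram // -/P.
have -> : P *m (adjmx X *m X) *m adjmx P = adjmx (X *m adjmx P) *m (X *m adjmx P).
  by rewrite adjmxM adjmxK !mulmxA.
rewrite adjmx_mul_diag.
by apply: sumr_ge0 => j _; rewrite exprn_ge0.
Qed.

Lemma trnorm_ge0 d (X : 'M[algC]_d) : 0 <= trnorm X.
Proof. by apply: sumr_ge0 => i _; rewrite sqrtC_ge0 gram_spectral_diag_ge0. Qed.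

Lemma trnorm_sqr_le d (X : 'M[algC]_d) :
  trnorm X ^+ 2 <= d%:R * \tr (adjmx X *m X).
Proof.
rewrite -sum_spectral_diag_herm ?adjmx_gram //.
under [X in _ <= _ * X]eq_bigr => i _ do
  rewrite -(sqrtCK (spectral_diag (adjmx X *m X) 0 i)).
rewrite -[d in d%:R]card_ord; apply: sqr_sum_le_card => i.
by rewrite ger0_real // sqrtC_ge0 gram_spectral_diag_ge0.
Qed.

Lemma herm_form2_cs (A B g : algC) : 0 <= A -> 0 <= B ->
  (forall a b, 0 <= a * a^* * A + a * b^* * g + b * a^* * g^* + b * b^* * B) ->
  `|g| ^+ 2 <= A * B.
Proof.
move=> A_ge0 B_ge0 form_ge0; rewrite normCK.
have A_conj := geC0_conj A_ge0; have B_conj := geC0_conj B_ge0.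
have [B_gt0|] := boolP (0 < B).
  have := form_ge0 B (- g); rewrite !rmorphN /= B_conj => H.
  rewrite -subr_ge0 -(pmulr_rge0 _ B_gt0).
  by have -> : B * (A * B - g * g^*) =
    B * B * A + B * - g^* * g + - g * B * g^* + - g * - g^* * B by ring.
rewrite lt_def negb_and negbK B_ge0 orbF => /eqP B0.
have [A_gt0|] := boolP (0 < A).
  have := form_ge0 (- g^*) A; rewrite !rmorphN /= conjCK A_conj => H.
  rewrite -subr_ge0 -(pmulr_rge0 _ A_gt0).
  by have -> : A * (A * B - g * g^*) =
    - g^* * - g * A + - g^* * A * g + A * - g * g^* + A * A * B by ring.
rewrite lt_def negb_and negbK A_ge0 orbF => /eqP A0; subst A B.
have := form_ge0 1 (- g); rewrite !rmorphN /= conjC1 => H.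
have : 0 <= - (g * g^*) *+ 2.
  by have -> : - (g * g^*) *+ 2 =
    1 * 1 * 0 + 1 * - g^* * g + - g * 1 * g^* + - g * - g^* * 0 by ring.
by rewrite pmulrn_lge0 // oppr_ge0 mulr0.
Qed.

Definition trform {d L} (S : 'M[algC]_d) (u w : 'M[algC]_(L, d)) : algC :=
  \tr (u *m S *m adjmx w).

Section TraceForm.

Context (d L : nat) (S : 'M[algC]_d) (S_psd : psdmx S).

Lemma trform_ge0 (u : 'M[algC]_(L, d)) : 0 <= trform S u u.
Proof.
apply: sumr_ge0 => l _; set v := \col_a (u l a)^*.
have -> : (u *m S *m adjmx u) l l = (adjmx v *m S *m v) 0 0.
  rewrite !mxE; apply: eq_bigr => a _; rewrite !mxE; congr (_ * _).
  by apply: eq_bigr => b _; rewrite !mxE conjCK.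
exact: S_psd.2.
Qed.

Lemma trform_conj (u w : 'M[algC]_(L, d)) : trform S w u = (trform S u w)^*.
Proof. by rewrite /trform -mxtrace_adjmx !adjmxM adjmxK -S_psd.1 mulmxA. Qed.

Lemma trform_expand (u w : 'M[algC]_(L, d)) a b :
  trform S (a *: u + b *: w) (a *: u + b *: w) =
  a * a^* * trform S u u + a * b^* * trform S u w + b * a^* * trform S w u
  + b * b^* * trform S w w.
Proof.
rewrite /trform adjmxD !adjmxZ !mulmxDl !mulmxDr !linearD /=.
rewrite -!scalemxAr -!scalemxAl !mxtraceZ; ring.
Qed.

Lemma trform_cs (u w : 'M[algC]_(L, d)) :
  `|trform S u w| ^+ 2 <= trform S u u * trform S w w.
Proof.
apply: herm_form2_cs; rewrite ?trform_ge0 // => a b.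
by rewrite -trform_conj -trform_expand trform_ge0.
Qed.

End TraceForm.

Definition mxslice {d L N} (M : 'M[algC]_(d * L, d * N)) (i : 'I_d) (b : 'I_N) :
  'M[algC]_(L, d) := \matrix_(l, a) M (mxtens_index (i, l)) (mxtens_index (a, b)).

Lemma ptrace2_conj_kronE d L N (M : 'M[algC]_(d * L, d * N)) (S : 'M[algC]_d)
    (rho : 'M[algC]_N) i j :
  ptrace2 (M *m kron S rho *m adjmx M) i j =
  \sum_b \sum_c trform S (mxslice M i b) (mxslice M j c) * rho b c.
Proof.
(* Both sides are sums over l, c, a', b, a of
   M (i, l) (a, b) * S a a' * rho b c * conj (M (j, l) (a', c));
   the indices are peeled off in that order. *)
under [RHS]eq_bigr => b _ do under eq_bigr => c _ do rewrite mulr_suml.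
rewrite mxE exchange_big; under [RHS]eq_bigr => c _ do rewrite exchange_big.
rewrite exchange_big /=; apply: eq_bigr => l _.
rewrite mxE big_mxtens_index exchange_big; apply: eq_bigr => c _.
under eq_bigr => a' _ do rewrite !mxE big_mxtens_index mulr_suml.
under [RHS]eq_bigr => b _ do rewrite mxE mulr_suml.
rewrite [RHS]exchange_big; apply: eq_bigr => a' _.
under [LHS]eq_bigr => a _ do rewrite mulr_suml.
rewrite exchange_big; apply: eq_bigr => b _.
rewrite mxE !mulr_suml; apply: eq_bigr => a _.
by rewrite /kron tensmxE !mxE; ring.
Qed.

Lemma mxtrace_ptrace2 p q (A : 'M[algC]_(p * q)) : \tr (ptrace2 A) = \tr A.
Proof. by rewrite /mxtrace [RHS]big_mxtens_index; apply: eq_bigr => i _; rewrite mxE. Qed.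

Lemma sum_trform_mxslice d L N (M : 'M[algC]_(d * L, d * N)) (S : 'M[algC]_d) :
  \sum_i \sum_b trform S (mxslice M i b) (mxslice M i b) =
  \tr (adjmx M *m M *m kron S (1%:M : 'M[algC]_N)).
Proof.
rewrite -mulmxA mxtrace_mulC -mxtrace_ptrace2; apply: eq_bigr => i _.
rewrite ptrace2_conj_kronE; apply: eq_bigr => b _.
by under eq_bigr => c _ do rewrite mxE; rewrite sum_mul_delta.
Qed.

Section PauliAverage.

Context {k n m : nat} (M : 'M[algC]_(2 ^ k * 2 ^ (n + m), 2 ^ k * 2 ^ n)).
Context (Sigma : 'M[algC]_(2 ^ k)) (Sigma_psd : psdmx Sigma).

Let g i j b c := trform Sigma (mxslice M i b) (mxslice M j c).
Let T := \tr (adjmx M *m M *m kron Sigma (1%:M : 'M[algC]_(2 ^ n))).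
Let X s := Amap M Sigma (rho_mm n) - Amap M Sigma (rho_P s).

Lemma Amap_diff_entry s i j :
  X s i j = - 2 ^- n * \sum_b \sum_c g i j b c * pauli s b c.
Proof.
have subE (A B : 'M[algC]_(2 ^ k)) : (A - B) i j = A i j - B i j by rewrite !mxE.
rewrite subE /Amap !ptrace2_conj_kronE -sumrB mulr_sumr; apply: eq_bigr => b _.
rewrite -sumrB mulr_sumr; apply: eq_bigr => c _.
by rewrite /rho_mm /rho_P !mxE; ring.
Qed.

Lemma sum_sqr_norm_trform_le :
  \sum_i \sum_j \sum_b \sum_c `|g i j b c| ^+ 2 <= T ^+ 2.
Proof.
rewrite /T -sum_trform_mxslice expr2 big_distrlr /=.
apply: ler_sum => i _; apply: ler_sum => j _; rewrite big_distrlr /=.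
apply: ler_sum => b _; apply: ler_sum => c _.
exact: trform_cs.
Qed.

Lemma sum_frobenius_Amap_diff_le :
  \sum_s \tr (adjmx (X s) *m X s) <= 2 ^- n * T ^+ 2.
Proof.
have N_ge0 : 0 <= 2 ^- n :> algC by rewrite invr_ge0 exprn_ge0.
under eq_bigr => s _ do rewrite mxtrace_adjmx_mul.
under eq_bigr => s _ do under eq_bigr => j _ do under eq_bigr => i _ do
  rewrite Amap_diff_entry normrM normrN (ger0_norm N_ge0) exprMn.
under eq_bigr => s _ do under eq_bigr => j _ do rewrite -mulr_sumr.
under eq_bigr => s _ do rewrite -mulr_sumr.
rewrite -mulr_sumr exchange_big /=.
under eq_bigr => j _ do rewrite exchange_big /=.
under eq_bigr => j _ do under eq_bigr => i _ do rewrite pauli_parseval.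
under eq_bigr => j _ do rewrite -mulr_sumr.
have scaleE : (2 ^- n) ^+ 2 * (2 ^ n)%:R = 2 ^- n :> algC.
  by rewrite expr2 -mulrA natrX mulVf ?mulr1 // expf_neq0 // pnatr_eq0.
rewrite -mulr_sumr mulrA scaleE; apply: ler_wpM2l => //.
by rewrite exchange_big sum_sqr_norm_trform_le.
Qed.

Lemma sum_trnorm_Amap_diff_le :
  \sum_s trnorm (X s) ^+ 2 <= 2 ^+ k / 2 ^+ n * T ^+ 2.
Proof.
apply: le_trans (ler_sum _ (fun s _ => @trnorm_sqr_le _ (X s))) _.
rewrite -mulr_sumr natrX -mulrA; apply: ler_wpM2l; first by rewrite exprn_ge0.
exact: sum_frobenius_Amap_diff_le.
Qed.

End PauliAverage.

Lemma natr_4expn_sub1 n : ((4 ^+ n - 1)%:R : algC) = 2 ^+ (2 * n) - 1.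
Proof.
rewrite natrXE natrB ?expn_gt0 // natrX exprM; congr (_ ^+ _ - _).
by rewrite expr2 -natrM.
Qed.

Theorem mainTheorem11 (k n m : nat) (hn : (0 < n)%N)
  (M : 'M[algC]_(2 ^ k * 2 ^ (n + m), 2 ^ k * 2 ^ n))
  (Sigma : 'M[algC]_(2 ^ k))
  (hM : loewner_le (adjmx M *m M) 1%:M)
  (hSigma : psdmx Sigma) :
  ((4 ^+ n - 1)%:R)^-1 *
    \sum_(s : {ffun 'I_n -> 'I_4} | s != pauli_id n)
       trnorm (Amap M Sigma (rho_mm n) - Amap M Sigma (rho_P s)) ^+ 2
  <= (2 ^+ k / 2 ^+ n) * ((2 ^+ (2 * n) - 1)^-1)
     * (\tr (adjmx M *m M *m kron Sigma (1%:M : 'M[algC]_(2 ^ n)))) ^+ 2.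
Proof.
rewrite natr_4expn_sub1 mulrAC mulrC; apply: ler_wpM2r.
  by rewrite invr_ge0 subr_ge0 exprn_ege1 // ler1n.
apply: le_trans (sum_trnorm_Amap_diff_le M Sigma hSigma).
by apply: sumr_le_pred => s; rewrite exprn_ge0 ?trnorm_ge0.
Qed.
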